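(* Let $\Gamma$ be a single-player extensive-form game. For each leaf $z\in\mathcal Z$, $$\frac{1}{\alpha(z)}\le\prod_{I\in\mathcal I_1:\,n_z(I)>1}\min(n_z(I),|A_I|)^{n_z(I)}.$$
   Context: A single-player extensive-form game consists of a finite rooted tree (leaves $\mathcal Z$), nonterminal nodes belonging to Player 1 or chance, and a partition $\mathcal I_1$ of Player 1's nodes into infosets with common action sets $A_I$. For $z\in\mathcal Z$ with root-to-$z$ path $(h_0,\dots,h_{d-1})$, let $I_k$ be the infoset of $h_k$ (for Player 1's nodes) and $a_k$ the action taken at $h_k$. For $I\in\mathcal I_1$ and $a\in A_I$: $n_z(I)=|\{k:I_k=I\}|$, $n_z(a)=|\{k:I_k=I,a_k=a\}|$, $p_z(a)=n_z(a)/n_z(I)$, and the absentmindedness coefficient is $\alpha(z)=\prod_{I\in\mathcal I_1:n_z(I)>1}\prod_{a\in A_I:n_z(a)>0}p_z(a)^{n_z(a)}$. *)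

From HB Require Import structures.
From mathcomp Require Import all_boot all_order all_algebra.
Set Implicit Arguments. Unset Strict Implicit. Unset Printing Implicit Defensive.
Import Order.TTheory GRing.Theory Num.Theory.

(* A single-player extensive-form game on a finite rooted tree.
   - [Node] : the finite set of nodes, [root] the root, [par x] the parent of x
     ([None] only at the root).
   - [isP1 h] : h is a node of Player 1; other nonterminal nodes are chance nodes.
   - [info h] : the infoset of a Player-1 node h (meaningless for other nodes).
   - [A I]   : the common action set of infoset I.
   - [lab c] : the action labelling the edge from [par c] to c. *)
Record game := Game {
  Node : finType;
  Info : finType;
  Act : finType;
  root : Node;
  par : Node -> option Node;
  isP1 : pred Node;
  info : Node -> Info;
  A : Info -> {set Act};
  lab : Node -> Act
}.

Definition is_leaf (G : game) (z : Node G) : Prop :=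
  forall c : Node G, par c <> Some z.

Definition well_formed (G : game) : Prop :=
  par (root G) = None /\
      (forall x : Node G, x <> root G -> par x <> None) /\
      (* every node reaches the root: the parent relation is a rooted tree *)
      (forall x : Node G, exists n, iter n (obind (@par G)) (Some x) = Some (root G)) /\
      (forall h : Node G, isP1 h -> ~ is_leaf h) /\
      (forall h c : Node G, isP1 h -> par c = Some h -> lab c \in A (info h)) /\
      (forall h c c' : Node G, isP1 h -> par c = Some h -> par c' = Some h ->
          lab c = lab c' -> c = c') /\
      (forall (h : Node G) (a : Act G), isP1 h -> a \in A (info h) ->
          exists c, par c = Some h /\ lab c = a).

Fixpoint ancs (G : game) (fuel : nat) (x : Node G) : seq (Node G * Node G) :=
  match fuel with
  | 0 => [::]
  | f.+1 => match par x with
            | None => [::]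
            | Some p => (p, x) :: ancs f p
            end
  end.

(* The (infoset, action) pairs (I_k, a_k) at Player-1 nodes on the root-to-z path.
   A path in the tree has at most #|Node| - 1 edges, so fuel #|Node| suffices. *)
Definition p1_hist (G : game) (z : Node G) : seq (Info G * Act G) :=
  [seq (info e.1, lab e.2) | e <- ancs #|Node G| z & isP1 e.1].

Definition n_I (G : game) (z : Node G) (I : Info G) : nat :=
  count (fun q => q.1 == I) (p1_hist z).

Definition n_a (G : game) (z : Node G) (I : Info G) (a : Act G) : nat :=
  count (pred1 (I, a)) (p1_hist z).

Definition p_a (R : realFieldType) (G : game) (z : Node G) (I : Info G) (a : Act G) : R :=
  ((n_a z I a)%:R / (n_I z I)%:R)%R.

Definition alpha (R : realFieldType) (G : game) (z : Node G) : R :=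
  (\prod_(I : Info G | (1 < n_I z I)%N)
     \prod_(a in A I | (0 < n_a z I a)%N) (p_a R z I a) ^+ (n_a z I a))%R.

From mathcomp Require Import all_boot all_order all_algebra.
Import Order.TTheory GRing.Theory Num.Theory.
Set Implicit Arguments. Unset Strict Implicit.

(* For an infoset I visited n = n_z(I) times, the factor of 1/alpha(z) contributed by I
   is the product over the actions a taken at I of (n / n_z(a))^(n_z(a)).  Weighted AM-GM,
   with the n_z(a) as weights, bounds it by k^n, where k is the number of distinct actions
   taken at I; and k <= n since each of them is taken at least once, k <= |A_I| since
   every action taken at I belongs to A_I. *)

Section AGM.
Variable R : realFieldType.
Local Open Scope ring_scope.

Lemma ler_AGM_seq (l : seq R) : all (>= 0) l ->
  \prod_(x <- l) x <= ((\sum_(x <- l) x) / (size l)%:R) ^+ size l.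
Proof.
move=> /allP l_ge0.
have := @leif_AGM R 'I_(size l) predT (nth 0 l).
rewrite cardT size_enum_ord (big_nth 0) (big_nth 0 _ id) !big_mkord.
by move=> AGM; apply: (AGM _).1 => i _; apply/l_ge0/mem_nth.
Qed.

Lemma ler_weighted_AGM (T : eqType) (r : seq T) (w : T -> nat) (y : T -> R) :
  {in r, forall t, 0 <= y t} ->
  \prod_(t <- r) y t ^+ w t <=
    ((\sum_(t <- r) (w t)%:R * y t) / (\sum_(t <- r) w t)%N%:R) ^+ (\sum_(t <- r) w t)%N.
Proof.
move=> y_ge0; pose l := flatten [seq nseq (w t) (y t) | t <- r].
have prod_l : \prod_(x <- l) x = \prod_(t <- r) y t ^+ w t.
  by rewrite big_flatten big_map; apply: eq_bigr => t _;
     rewrite big_nseq iter_mulr_1.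
have sum_l : \sum_(x <- l) x = \sum_(t <- r) (w t)%:R * y t.
  by rewrite big_flatten big_map; apply: eq_bigr => t _;
     rewrite big_nseq iter_addr_0 mulr_natl.
have size_l : size l = (\sum_(t <- r) w t)%N.
  by rewrite size_flatten sumnE /shape -map_comp big_map;
     apply: eq_bigr => t _; rewrite /= size_nseq.
rewrite -prod_l -sum_l -size_l; apply: ler_AGM_seq.
by apply/allP => x /flattenP [_ /mapP [t tr ->] /nseqP [-> _]]; apply: y_ge0.
Qed.

Lemma inv_prod_frequencies_le (S : finType) (D : {pred S}) (m : S -> nat) (n : nat) :
  (\sum_(a in D) m a)%N = n ->
  (\prod_(a in D | (0 < m a)%N) ((m a)%:R / n%:R) ^+ m a)^-1 <= (minn n #|D|)%:R ^+ n :> R.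
Proof.
move=> sum_m.
have n_supp : n = (\sum_(a in D | 0 < m a) m a)%N.
  by rewrite -sum_m [RHS]big_mkcondr; apply: eq_bigr => a _; case: posnP.
rewrite -prodfV; under eq_bigr do rewrite -exprVn invf_div.
rewrite -big_filter; apply: le_trans; first apply: ler_weighted_AGM.
  by move=> a _; rewrite divr_ge0 ?ler0n.
rewrite !big_filter -n_supp.
have [->|n_gt0] := posnP n; first by rewrite !expr0.
rewrite (eq_bigr (fun=> n%:R)); last first.
  by move=> a /andP[_ ma_gt0]; rewrite mulrC divfK // pnatr_eq0 -lt0n.
rewrite sumr_const -[n%:R *+ _]mulr_natl mulfK ?pnatr_eq0 -?lt0n // -!natrX ler_nat.
rewrite leq_exp2r // leq_min; apply/andP; split.
  by rewrite n_supp -sum1_card; apply: leq_sum => a /andP[].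
by apply: subset_leq_card; apply/subsetP => a /andP[].
Qed.

End AGM.

Lemma sum_count_pair (T : eqType) (S : finType) (s : seq (T * S)) (x : T) (B : {pred S}) :
  (\sum_(y in B) count_mem (x, y) s)%N = count (fun q => (q.1 == x) && (q.2 \in B)) s.
Proof.
elim: s => [|[x' y'] s IHs] /=; first by rewrite big1.
rewrite big_split IHs /=; congr (_ + _)%N.
have [-> /=|x'_neq] := eqVneq x' x; last first.
  by rewrite big1 // => y _; rewrite xpair_eqE (negbTE x'_neq).
under eq_bigr do rewrite xpair_eqE eqxx.
have [y'B|y'NB] := boolP (y' \in B); last first.
  by rewrite big1 // => y yB; case: eqVneq y'NB => // ->; rewrite yB.
rewrite (bigD1 y') //= eqxx big1 // => y /andP[_].
by rewrite eq_sym => /negbTE ->.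
Qed.

Lemma mem_ancs_par (G : game) (fuel : nat) (x : Node G) (e : Node G * Node G) :
  e \in ancs fuel x -> par e.2 = Some e.1.
Proof.
elim: fuel x => [|fuel IHfuel] x //=; case par_x: (par x) => [p|] //.
by rewrite inE => /predU1P[-> //|/IHfuel].
Qed.

Lemma p1_hist_act_in_A (G : game) (z : Node G) (q : Info G * Act G) :
  well_formed G -> q \in p1_hist z -> q.2 \in A q.1.
Proof.
case=> _ [_ [_ [_ [lab_in_A _]]]] /mapP[e]; rewrite mem_filter => /andP[p1e anc_e] ->.
exact: lab_in_A p1e (mem_ancs_par anc_e).
Qed.

Lemma sum_n_a (G : game) (z : Node G) (I : Info G) :
  well_formed G -> (\sum_(a in A I) n_a z I a)%N = n_I z I.
Proof.
move=> wf; rewrite /n_a sum_count_pair; apply: eq_in_count => q /= q_hist.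
by case: eqP => //= <-; apply: p1_hist_act_in_A q_hist.
Qed.

Theorem proposition11 (R : realFieldType) (G : game) (z : Node G) :
  well_formed G -> is_leaf z ->
  ((alpha R z)^-1 <=
     \prod_(I : Info G | (1 < n_I z I)%N) ((minn (n_I z I) #|A I|)%:R) ^+ (n_I z I))%R.
Proof.
(* The bound holds for the history of any node, leaf or not. *)
move=> wf _; rewrite /alpha -prodfV; apply: ler_prod => I _; apply/andP; split.
  by rewrite invr_ge0 prodr_ge0 // => a _; rewrite exprn_ge0 // divr_ge0 ?ler0n.
exact: inv_prod_frequencies_le (sum_n_a z I wf).
Qed.
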